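(* Let $n\geq 2$ and let $X$ be a finite subset of $\mathbb{R}^n$. Then there exists a polynomial map $F:\mathbb{R}^n\rightarrow\mathbb{R}^n$ such that $F(X)\subseteq \mathbb{R}\times\{0\}^{n-1}$ and $F$ has an inverse which is also a polynomial map $\mathbb{R}^n\rightarrow\mathbb{R}^n$. *)

From mathcomp Require Import all_boot all_algebra.
From mathcomp Require Import reals.
From mathcomp Require Import mpoly.

Set Implicit Arguments.
Unset Strict Implicit.
Unset Printing Implicit Defensive.

Import GRing.Theory.
Local Open Scope ring_scope.

Definition polymap (R : realType) (n : nat) := 'I_n -> {mpoly R[n]}.

Definition peval (R : realType) (n : nat) (F : polymap R n) (x : 'rV[R]_n)
  : 'rV[R]_n := \row_i (F i).@[fun j => x ord0 j].

Definition has_poly_inverse (R : realType) (n : nat) (F : polymap R n) : Prop :=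
  exists G : polymap R n,
    (forall x, peval G (peval F x) = x) /\ (forall x, peval F (peval G x) = x).

From mathcomp Require Import all_boot all_algebra.
From mathcomp Require Import reals.
From mathcomp Require Import mpoly.

(* Choose t such that the linear form u(x) = sum_j t^j x_j separates the
   points of X: for a <> b, u(a) - u(b) is a nonzero polynomial in t, and
   finitely many nonzero polynomials have a common non-root.  Interpolating
   the points along their u-values gives a polynomial curve L with
   L(u(a)) = a for a in X.  The map x |-> (u(x), x_i - L_i(u(x)))_(i>0) sends
   X into the first axis, and it is inverted by first recovering
   x_i = y_i + L_i(y_0) for i > 0 and then x_0 from y_0 = u(x). *)

Set Implicit Arguments.
Unset Strict Implicit.
Unset Printing Implicit Defensive.

Import GRing.Theory Num.Theory.
Local Open Scope ring_scope.

Lemma exists_common_nonroot (R : numDomainType) (ps : seq {poly R}) :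
  all (fun p => p != 0) ps -> exists t : R, all (fun p => ~~ root p t) ps.
Proof.
move=> ps_neq0; pose P := \prod_(p <- ps) p.
have P_neq0 : P != 0 by rewrite prodf_seq_neq0.
have nat_uniq : uniq [seq i%:R : R | i <- iota 0 (size P)].
  by rewrite map_inj_uniq ?iota_uniq //; apply: mulrIn; rewrite oner_eq0.
(* [P] has at most [size P - 1] roots, so one of [0, 1, ..., size P - 1] is not a root. *)
have := contraNN (fun roots => max_poly_roots P_neq0 roots nat_uniq).
rewrite size_map size_iota ltnn => /(_ isT) /allPn [t _ Pt_neq0]; exists t.
by move: Pt_neq0; rewrite /root horner_prod prodf_seq_neq0.
Qed.

Section Lagrange.
Variables (F : fieldType) (T : eqType) (s : seq T) (node : T -> F).

Definition lagrange_basis (a : T) : {poly F} :=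
  \prod_(b <- s | b != a) ((node a - node b)^-1 *: ('X - (node b)%:P)).

Definition lagrange_interp (g : T -> F) : {poly F} :=
  \sum_(a <- s) g a *: lagrange_basis a.

Hypotheses (s_uniq : uniq s) (node_inj : {in s &, injective node}).

Lemma lagrange_basis_node a c : a \in s -> c \in s ->
  (lagrange_basis a).[node c] = (a == c)%:R.
Proof.
move=> a_s c_s; rewrite horner_prod; have [<-|ca] := eqVneq a c.
  rewrite big_seq_cond big1 // => b /andP [b_s ba].
  rewrite hornerZ hornerXsubC mulVf // subr_eq0.
  by apply: contra ba => /eqP /node_inj -> //.
rewrite -big_filter (bigD1_seq c) ?filter_uniq ?mem_filter ?c_s 1?eq_sym ?ca //=.
by rewrite hornerZ hornerXsubC subrr mulr0 mul0r.
Qed.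

Lemma lagrange_interp_node g c : c \in s -> (lagrange_interp g).[node c] = g c.
Proof.
move=> c_s; rewrite horner_sum (bigD1_seq c) //= hornerZ lagrange_basis_node //.
rewrite eqxx mulr1 big_seq_cond big1 ?addr0 // => a /andP [a_s ac].
by rewrite hornerZ lagrange_basis_node // (negbTE ac) mulr0.
Qed.
End Lagrange.

Definition mhorner (R : comNzRingType) (k : nat) (p : {poly R}) (q : {mpoly R[k]})
  : {mpoly R[k]} := (map_poly (@mpolyC k R) p).[q].

Lemma meval_mhorner (R : comNzRingType) (k : nat) (v : 'I_k -> R) p q :
  (mhorner p q).@[v] = p.[q.@[v]].
Proof.
rewrite /mhorner -horner_map -map_poly_comp map_poly_id // => c _ /=.
exact: mevalC.
Qed.

Definition pform (R : nzRingType) (n : nat) (t : R) (x : 'rV[R]_n) : R := (rVpoly x).[t].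

Lemma pformE (R : comNzRingType) (n : nat) (t : R) (x : 'rV[R]_n) :
  pform t x = \sum_(j < n) t ^+ j * x ord0 j.
Proof. by rewrite /pform horner_poly; apply: eq_bigr => j _; rewrite valK mulrC. Qed.

Lemma pform_ord0 (R : comNzRingType) (n : nat) (t : R) (x : 'rV[R]_n.+1) :
  pform t x = x ord0 ord0 + \sum_(j < n.+1 | j != ord0) t ^+ j * x ord0 j.
Proof. by rewrite pformE (bigD1 ord0) //= expr0 mul1r. Qed.

Lemma exists_injective_pform (R : numDomainType) (n : nat) (X : seq 'rV[R]_n) :
  exists t : R, {in X &, injective (pform t)}.
Proof.
pose ps := [seq p <- [seq rVpoly (a - b) | a <- X, b <- X] | p != 0].
have [|t t_ok] := @exists_common_nonroot R ps; first exact: filter_all.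
exists t => a b a_X b_X; apply: contra_eq => ab; rewrite -subr_eq0.
have ab_neq0 : rVpoly (a - b) != 0.
  by apply: contra ab => /eqP ab0; rewrite -subr_eq0 -[a - b]rVpolyK ab0 linear0.
have := allP t_ok (rVpoly (a - b)); rewrite mem_filter ab_neq0 allpairs_f //.
by rewrite /root linearB hornerD hornerN => /(_ isT).
Qed.

Section Straighten.
Variables (R : realType) (n : nat) (t : R) (L : 'I_n.+1 -> {poly R}).

Definition pform_mpoly : {mpoly R[n.+1]} := \sum_(j < n.+1) t ^+ j *: 'X_j.

Lemma meval_pform_mpoly (x : 'rV[R]_n.+1) :
  pform_mpoly.@[fun j => x ord0 j] = pform t x.
Proof.
by rewrite pformE rmorph_sum; apply: eq_bigr => j _; rewrite /= mevalZ mevalXU.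
Qed.

Definition straighten : polymap R n.+1 := fun i =>
  if i == ord0 then pform_mpoly else 'X_i - mhorner (L i) pform_mpoly.

Definition straighten_inv : polymap R n.+1 := fun i =>
  if i == ord0 then
    'X_ord0 - \sum_(j < n.+1 | j != ord0) t ^+ j *: ('X_j + mhorner (L j) 'X_ord0)
  else 'X_i + mhorner (L i) 'X_ord0.

Lemma peval_straighten x : peval straighten x =
  \row_i (if i == ord0 then pform t x else x ord0 i - (L i).[pform t x]).
Proof.
apply/rowP => i; rewrite !mxE /straighten; case: eqP => _.
  exact: meval_pform_mpoly.
by rewrite mevalB meval_mhorner meval_pform_mpoly mevalXU.
Qed.

Lemma peval_straighten_inv y : peval straighten_inv y =
  \row_i (if i == ord0 then
            y ord0 ord0 - \sum_(j < n.+1 | j != ord0)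
                            t ^+ j * (y ord0 j + (L j).[y ord0 ord0])
          else y ord0 i + (L i).[y ord0 ord0]).
Proof.
apply/rowP => i; rewrite !mxE /straighten_inv; case: eqP => _.
  rewrite mevalB rmorph_sum mevalXU; congr (_ - _); apply: eq_bigr => j _.
  by rewrite /= mevalZ mevalD meval_mhorner !mevalXU.
by rewrite mevalD meval_mhorner !mevalXU.
Qed.

Lemma straighten_invertible : has_poly_inverse straighten.
Proof.
exists straighten_inv; split => x.
  rewrite peval_straighten_inv peval_straighten; apply/rowP => i.
  rewrite !mxE eqxx; case: eqP => [->|_]; last by rewrite subrK.
  rewrite pform_ord0 -addrA -[RHS]addr0; congr (_ + _); apply/eqP.
  rewrite subr_eq0; apply/eqP.
  by apply: eq_bigr => j /negbTE j0; rewrite !mxE j0 subrK.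
rewrite peval_straighten peval_straighten_inv; apply/rowP => i; rewrite !mxE.
set z := \row__ _.
have -> : pform t z = x ord0 ord0.
  rewrite pform_ord0 {1}/z mxE eqxx -addrA -[RHS]addr0; congr (_ + _).
  apply/eqP; rewrite addrC subr_eq0; apply/eqP.
  by apply: eq_bigr => j /negbTE j0; rewrite !mxE j0.
by case: eqP => [->|_]; rewrite ?addrK.
Qed.

End Straighten.

Lemma exists_poly_automorphism_onto_axis (R : realType) (n : nat)
    (X : seq 'rV[R]_n.+1) :
  exists F : polymap R n.+1, has_poly_inverse F /\
    (forall x, x \in X -> forall i : 'I_n.+1, (0 < i)%N -> peval F x ord0 i = 0).
Proof.
have [t t_inj] := exists_injective_pform (undup X).
pose L i := lagrange_interp (undup X) (pform t) (fun a => a ord0 i).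
exists (straighten t L); split; first exact: straighten_invertible.
move=> x x_X i i_gt0; rewrite peval_straighten mxE.
case: eqP => [i0|_]; first by rewrite i0 in i_gt0.
by rewrite lagrange_interp_node ?undup_uniq ?mem_undup ?subrr.
Qed.

Theorem lemma2 (R : realType) (n : nat) (hn : (2 <= n)%N) (X : seq 'rV[R]_n) :
  exists F : polymap R n,
    has_poly_inverse F /\
    (forall x, x \in X -> forall i : 'I_n, (0 < i)%N -> peval F x ord0 i = 0).
Proof.
case: n hn X => [//|n] _ X; exact: exists_poly_automorphism_onto_axis.
Qed.
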